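(* Let $\mathcal{C}$ be a systematic $[n,k,d]$ linear code over $\mathbb{F}_q$ which is an $(r,\delta)_i$ code, with $r\mid k$, $d<r+2\delta-1$, and $$d = n-k+1-\left(\left\lceil \tfrac{k}{r}\right\rceil-1\right)(\delta-1).$$ Then the generalized Hamming weights of the dual code satisfy $d^\perp_i = r+i$ for $1\le i\le \delta-1$.
   Context: For a linear code $\mathcal{D}$, its $j$-th generalized Hamming weight is the minimum size of the support $\bigcup_{\mathbf{c}\in\mathcal{E}}\{l: c_l\ne 0\}$ over all $j$-dimensional subcodes $\mathcal{E}$ of $\mathcal{D}$; $d^\perp_j$ denotes that of the dual code $\mathcal{C}^\perp$. Coordinate $i$ has locality $(r,\delta)$ if there is $S_i\ni i$ with $|S_i|\le r+\delta-1$ such that the punctured code $\mathcal{C}|_{S_i}$ has minimum distance at least $\delta$. An $(r,\delta)_i$ code is a systematic linear code (information symbols in the first $k$ coordinates) in which all $k$ information coordinates have locality $(r,\delta)$. *)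

(* linear codes as row spaces (mxalgebra) over a finite field. *)
From HB Require Import structures.
From mathcomp Require Import all_boot all_order all_algebra all_field.
Set Implicit Arguments. Unset Strict Implicit. Unset Printing Implicit Defensive.
Import GRing.Theory.
Local Open Scope ring_scope.

Section Codes.
Variables (F : finFieldType) (n : nat).

Definition wt_on (S : {set 'I_n}) (c : 'rV[F]_n) : nat :=
  #|[set l in S | c 0 l != 0]|.

Definition wt (c : 'rV[F]_n) : nat := wt_on setT c.

Definition in_code (C : 'M[F]_n) (c : 'rV[F]_n) : bool := (c <= C)%MS.

Definition dual (C : 'M[F]_n) : 'M[F]_n := kermx C^T.

Definition supp (E : 'M[F]_n) : {set 'I_n} :=
  [set l | [exists c : 'rV[F]_n, (c <= E)%MS && (c 0 l != 0)]].

Definition is_ghw (D : 'M[F]_n) (j w : nat) : Prop :=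
  (exists2 E : 'M[F]_n, (E <= D)%MS /\ \rank E = j & #|supp E| = w) /\
  (forall E : 'M[F]_n, (E <= D)%MS -> \rank E = j -> (w <= #|supp E|)%N).

Definition min_dist (C : 'M[F]_n) (d : nat) : Prop :=
  (exists2 c : 'rV[F]_n, in_code C c /\ c != 0 & wt c = d) /\
  (forall c : 'rV[F]_n, in_code C c -> c != 0 -> (d <= wt c)%N).

(* systematic code of dimension k: information symbols in the first k
   coordinates, i.e. the projection of C onto the first k coordinates is
   a bijection onto F^k (dim C = k and the projection is injective). *)
Definition systematic (C : 'M[F]_n) (k : nat) : Prop :=
  \rank C = k /\
  (forall c : 'rV[F]_n, in_code C c ->
     (forall l : 'I_n, (l < k)%N -> c 0 l = 0) -> c = 0).

(* coordinate i has locality (r, delta): there is S containing i with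
   |S| <= r + delta - 1 such that the punctured code C|_S has minimum
   distance >= delta (every nonzero codeword of C|_S has weight >= delta) *)
Definition has_locality (C : 'M[F]_n) (r delta : nat) (i : 'I_n) : Prop :=
  exists S : {set 'I_n},
    [/\ i \in S, (#|S| <= r + delta - 1)%N &
        forall c : 'rV[F]_n, in_code C c -> wt_on S c != 0%N ->
          (delta <= wt_on S c)%N].

Definition rdelta_i_code (C : 'M[F]_n) (k r delta : nat) : Prop :=
  systematic C k /\
  (forall i : 'I_n, (i < k)%N -> has_locality C r delta i).

End Codes.

Definition ceil_div (a b : nat) : nat := (a + b.-1) %/ b.

From mathcomp Require Import all_boot all_order all_algebra all_field zify.
Set Implicit Arguments. Unset Strict Implicit. Unset Printing Implicit Defensive.
Import GRing.Theory.
Local Open Scope ring_scope.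

(* Upper bound: the local group of an information coordinate has at most
   [r + delta - 1] coordinates and the code punctured to it has minimum distance
   at least [delta], so by the Singleton bound its dimension [rho] is at most [r];
   any [rho + i] of these coordinates then support an [i]-dimensional subcode of
   the dual.  Lower bound: if an [i]-dimensional dual subcode had support [S] with
   [#|S| < r + i], the code shortened on [S] would have dimension at least
   [k - #|S| + i > k - r], and the Singleton-like bound for locally repairable
   codes, applied to it, contradicts the optimality of [d]. *)

Lemma subset_of_card (T : finType) (U : {set T}) m :
  (m <= #|U|)%N -> exists2 W : {set T}, W \subset U & #|W| = m.
Proof.
elim: m => [|m IHm] ltmU; first by exists set0; rewrite ?sub0set ?cards0.
have [W sWU cardW] := IHm (ltnW ltmU).
have : (0 < #|U :\: W|)%N by rewrite cardsD (setIidPr sWU) cardW subn_gt0.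
rewrite card_gt0 => /set0Pn[x]; rewrite inE => /andP[xW xU].
exists (x |: W); last by rewrite cardsU1 xW cardW.
by rewrite subUset sub1set xU.
Qed.

Lemma submx_of_rank (K : fieldType) m n (X : 'M[K]_(m, n)) i :
  (i <= \rank X)%N -> exists2 E : 'M[K]_n, (E <= X)%MS & \rank E = i.
Proof.
move=> le_i_X; exists (pid_mx i *m row_base X).
  by rewrite (submx_trans (submxMl _ _)) ?eq_row_base.
by rewrite mxrankMfree ?row_base_free // rank_pid_mx // (leq_trans le_i_X (rank_leq_col X)).
Qed.

Section CoordinateProjection.
Context {F : finFieldType} {n : nat}.
Implicit Types (S T U : {set 'I_n}) (c x : 'rV[F]_n).

Definition proj_on S : 'M[F]_n := diag_mx (\row_l (l \in S)%:R).

Lemma proj_onE S a l : proj_on S a l = ((a == l) && (l \in S))%:R.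
Proof. by rewrite !mxE; case: eqP => [->|_]; rewrite ?mulr1n ?mulr0n. Qed.

Lemma mul_proj_on m (A : 'M[F]_(m, n)) S a l :
  (A *m proj_on S) a l = if l \in S then A a l else 0.
Proof. by rewrite mul_mx_diag !mxE; case: (l \in S); rewrite ?mulr1 ?mulr0. Qed.

Lemma trmx_proj_on S : (proj_on S)^T = proj_on S.
Proof. exact: tr_diag_mx. Qed.

Lemma proj_on_subset S T : S \subset T -> proj_on T *m proj_on S = proj_on S.
Proof.
move=> sST; apply/matrixP => a l; rewrite mul_proj_on !proj_onE.
by case lS: (l \in S); rewrite ?andbF // (subsetP sST _ lS) !andbT.
Qed.

Lemma submx_proj_onP m (A : 'M[F]_(m, n)) S :
  reflect (forall a l, l \notin S -> A a l = 0) (A <= proj_on S)%MS.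
Proof.
apply: (iffP idP) => [/submxP[D ->] a l lS | A0].
  by rewrite -(proj_on_subset (subxx S)) mulmxA mul_proj_on (negbTE lS).
suff <- : A *m proj_on S = A by apply: submxMl.
by apply/matrixP => a l; rewrite mul_proj_on; case: ifPn => // /A0 ->.
Qed.

Lemma sub_kermx_proj_onP m (A : 'M[F]_(m, n)) S :
  reflect (forall a l, l \in S -> A a l = 0) (A <= kermx (proj_on S))%MS.
Proof.
rewrite sub_kermx; apply: (iffP eqP) => [A0 a l lS | A0].
  by move/matrixP/(_ a l): A0; rewrite mul_proj_on lS mxE.
by apply/matrixP => a l; rewrite mul_proj_on mxE; case: ifP => // /A0 ->.
Qed.

Lemma submx_proj_onK m (A : 'M[F]_(m, n)) S :
  (A <= proj_on S)%MS -> A *m proj_on S = A.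
Proof.
move/submx_proj_onP=> A0; apply/matrixP => a l; rewrite mul_proj_on.
by case: ifPn => // /A0 ->.
Qed.

(* [proj_on S] factors as [N^T *m N] through the row-free selection matrix N. *)
Lemma mxrank_proj_on S : \rank (proj_on S) = #|S|.
Proof.
pose N : 'M[F]_(#|S|, n) := \matrix_(a, j) (enum_val a == j)%:R.
have NNt : N *m N^T = 1%:M.
  apply/matrixP => a b; rewrite !mxE (bigD1 (enum_val a)) //= big1 => [|j ja].
    by rewrite !mxE eqxx mul1r addr0 (inj_eq enum_val_inj) eq_sym.
  by rewrite !mxE eq_sym (negbTE ja) mul0r.
have freeN : row_free N by apply/row_freeP; exists N^T.
have -> : proj_on S = N^T *m N.
  apply/matrixP => l j; rewrite proj_onE !mxE.
  have [<- | lj] := eqVneq l j; last first.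
    rewrite big1 // => a _; rewrite !mxE.
    by case: eqP => [-> | _]; rewrite ?mul0r // (negbTE lj) mulr0.
  case: (boolP (l \in S)) => [lS | lS]; last first.
    rewrite big1 // => a _; rewrite !mxE.
    by case: eqP => [el | _]; [move: lS; rewrite -el enum_valP | rewrite mul0r].
  rewrite (bigD1 (enum_rank_in lS l)) //= big1 => [|a al].
    by rewrite !mxE enum_rankK_in // eqxx mul1r addr0.
  rewrite !mxE; case: eqP => [el | _]; last by rewrite mul0r.
  by move: al; rewrite -{1}(enum_valK_in lS a) el eqxx.
by rewrite mxrankMfree // mxrank_tr; apply/eqP.
Qed.

Lemma wt_mul_proj_on c S : wt (c *m proj_on S) = wt_on S c.
Proof.
by apply: eq_card => l; rewrite !inE mul_proj_on; case: (l \in S); rewrite ?eqxx.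
Qed.

Lemma wt_eq0 c : (wt c == 0%N) = (c == 0).
Proof.
rewrite cards_eq0; apply/eqP/eqP => [c0 | ->]; last first.
  by apply/setP => l; rewrite !inE mxE eqxx.
apply/rowP => l; rewrite mxE; apply/eqP; apply: contraT => cl.
by have := in_set0 l; rewrite -c0 !inE cl.
Qed.

Lemma wt_le_card c S : (c <= proj_on S)%MS -> (wt c <= #|S|)%N.
Proof.
move/submx_proj_onP=> c0; apply/subset_leq_card/subsetP => l.
by rewrite !inE; apply: contraR => /c0 ->.
Qed.

(* Some nonzero [x] in [X] vanishes on a set [W] of [\rank X - 1] coordinates of [U]. *)
Lemma singleton_bound (X : 'M[F]_n) U w :
  (X <= proj_on U)%MS ->
  (forall x, (x <= X)%MS -> x != 0 -> (w <= wt x)%N) ->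
  (0 < \rank X)%N -> (\rank X + w <= #|U| + 1)%N.
Proof.
move=> sXU wtX rankX_gt0.
have rankX_le : (\rank X <= #|U|)%N by rewrite -mxrank_proj_on mxrankS.
have [W sWU cardW] := subset_of_card (leq_trans (leq_subr 1 _) rankX_le).
have : (0 < \rank (X :&: kermx (proj_on W)))%N.
  have rank_split : (\rank (X *m proj_on W) + \rank (X :&: kermx (proj_on W)))%N
    = \rank X := mxrank_mul_ker _ _.
  have : (\rank (X *m proj_on W) <= #|W|)%N by rewrite -mxrank_proj_on mxrankM_maxr.
  by lia.
rewrite lt0n mxrank_eq0 => /rowV0Pn[x sxXW x_neq0].
have sxX : (x <= X)%MS := submx_trans sxXW (capmxSl _ _).
have wt_x : (wt x <= #|U :\: W|)%N.
  apply: wt_le_card; apply/submx_proj_onP => a l; rewrite inE negb_and negbK.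
  case/orP=> [lW | lU].
    by move/sub_kermx_proj_onP: (submx_trans sxXW (capmxSr _ _)); apply.
  by move/submx_proj_onP: (submx_trans sxX sXU); apply.
have := wtX x sxX x_neq0.
by rewrite cardsD (setIidPr sWU) cardW in wt_x; lia.
Qed.

Lemma submx_proj_supp (E : 'M[F]_n) : (E <= proj_on (supp E))%MS.
Proof.
apply/submx_proj_onP => a l; rewrite inE; apply: contraNeq => Eal.
by apply/existsP; exists (row a E); rewrite row_sub mxE Eal.
Qed.

Lemma supp_subset (E : 'M[F]_n) S : (E <= proj_on S)%MS -> supp E \subset S.
Proof.
move=> sES; apply/subsetP => l; rewrite inE => /existsP[c /andP[scE]].
by apply: contra_neqT => lS; move/submx_proj_onP: (submx_trans scE sES); apply.
Qed.

Definition shorten (C : 'M[F]_n) S := (C :&: kermx (proj_on S))%MS.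

Lemma mxrank_dual_on (C : 'M[F]_n) S :
  (\rank (C *m proj_on S) + \rank (proj_on S :&: dual C))%N = #|S|.
Proof.
pose P := proj_on S.
have <- : \rank (P *m (P *m C^T)) = \rank (C *m P).
  by rewrite mulmxA proj_on_subset // -mxrank_tr trmx_mul trmxK trmx_proj_on.
have <- : \rank (P :&: kermx (P *m C^T)) = \rank (P :&: dual C).
  apply/eqmx_rank/andP; split; rewrite sub_capmx capmxSl /= sub_kermx.
    by rewrite -[X in X *m _](submx_proj_onK (capmxSl _ _)) -mulmxA -sub_kermx capmxSr.
  by rewrite mulmxA submx_proj_onK ?capmxSl // -sub_kermx capmxSr.
by rewrite mxrank_mul_ker mxrank_proj_on.
Qed.

Lemma local_rank_bound (C Y : 'M[F]_n) S U delta :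
  (forall c, in_code C c -> wt_on S c != 0%N -> (delta <= wt_on S c)%N) ->
  (Y <= C)%MS -> (Y *m proj_on S <= proj_on U)%MS -> (0 < \rank (Y *m proj_on S))%N ->
  (\rank (Y *m proj_on S) + delta <= #|U| + 1)%N.
Proof.
move=> locS sYC sYU rank_gt0; apply: singleton_bound sYU _ rank_gt0.
move=> y /submxP[w ->] y_neq0; rewrite mulmxA wt_mul_proj_on.
apply: locS; first exact: submx_trans (submxMl w Y) sYC.
by rewrite -wt_mul_proj_on -mulmxA wt_eq0.
Qed.

End CoordinateProjection.

Section LocallyRepairableCode.
Variables (F : finFieldType) (n k r delta d : nat) (C : 'M[F]_n).
Hypothesis C_sys : systematic C k.
Hypothesis C_loc : forall i : 'I_n, (i < k)%N -> has_locality C r delta i.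
Hypothesis C_wt : forall c, in_code C c -> c != 0 -> (d <= wt c)%N.
Hypothesis r_gt0 : (0 < r)%N.
Hypothesis delta_gt0 : (0 < delta)%N.

Lemma systematic_info_support c :
  in_code C c -> c != 0 -> exists2 j : 'I_n, (j < k)%N & c 0 j != 0.
Proof.
move=> cC /eqP c_neq0.
have [/existsP[j /andP[jk cj]] | no_j] := boolP [exists j : 'I_n, (j < k)%N && (c 0 j != 0)].
  by exists j.
case: c_neq0; apply: (proj2 C_sys c cC) => l lk; apply/eqP; apply: contraNT no_j => cl.
by apply/existsP; exists l; rewrite lk.
Qed.

(* Induction on [n - #|T|]: a nonzero word of the shortened code has an
   information coordinate outside [T]; shortening further on its local group [S]
   loses [\rank X <= r] dimensions and adds at least [\rank X + delta - 1]
   coordinates. *)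
Lemma shorten_locality_bound T : (0 < \rank (shorten C T))%N ->
  (d + #|T| + \rank (shorten C T)
     + (delta - 1) * ((\rank (shorten C T) - 1) %/ r) <= n + 1)%N.
Proof.
have [m le_m] := ubnP (n - #|T|); elim: m => // m IHm in T le_m *.
set Z := shorten C T; set z := \rank Z => z_gt0.
have sZC : (Z <= C)%MS := capmxSl _ _.
have sZT : (Z <= kermx (proj_on T))%MS := capmxSr _ _.
have cardTC : (#|T| + #|~: T| = n)%N by rewrite cardsC card_ord.
have [z_le_r | r_lt_z] := leqP z r.
  have sZ : (Z <= proj_on (~: T))%MS.
    by apply/submx_proj_onP => a l; rewrite inE negbK; move/sub_kermx_proj_onP: sZT; apply.
  have := singleton_bound sZ (fun x sxZ => C_wt (submx_trans sxZ sZC)) z_gt0.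
  by rewrite divn_small; [lia | rewrite -/z; lia].
have [x sxZ x_neq0] : exists2 x : 'rV[F]_n, (x <= Z)%MS & x != 0.
  by apply/rowV0Pn; rewrite -mxrank_eq0 -lt0n.
have [j jk xj] := systematic_info_support (submx_trans sxZ sZC) x_neq0.
have [S [jS cardS locS]] := C_loc jk.
have jT : j \notin T.
  by apply: contra xj => jT; apply/eqP; move/sub_kermx_proj_onP: (submx_trans sxZ sZT); apply.
pose X := Z *m proj_on S.
have sXU : (X <= proj_on (S :\: T))%MS.
  apply/submx_proj_onP => a l; rewrite inE negb_and negbK mul_proj_on.
  case/orP=> [lT | lS]; last by rewrite (negbTE lS).
  by case: ifP => // _; move/sub_kermx_proj_onP: sZT; apply.
have X_gt0 : (0 < \rank X)%N.
  rewrite lt0n mxrank_eq0; apply: contraNneq xj => X0.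
  have := submxMr (proj_on S) sxZ; rewrite -/X X0 submx0 => /eqP/matrixP/(_ 0 j).
  by rewrite mul_proj_on jS mxE => ->.
have X_bound : (\rank X + delta <= #|S :\: T| + 1)%N :=
  local_rank_bound locS sZC sXU X_gt0.
have rank_split : (\rank X + \rank (Z :&: kermx (proj_on S)))%N = z := mxrank_mul_ker _ _.
have rank_le : (\rank (Z :&: kermx (proj_on S)) <= \rank (shorten C (T :|: S)))%N.
  apply/mxrankS; rewrite sub_capmx (submx_trans (capmxSl _ _) sZC) /=.
  apply/sub_kermx_proj_onP => a l; rewrite inE => /orP[lT | lS].
    exact: (elimT (sub_kermx_proj_onP _ _) (submx_trans (capmxSl _ _) sZT)).
  exact: (elimT (sub_kermx_proj_onP _ _) (capmxSr _ _)).
have cardTS : (#|T :|: S| = #|T| + #|S :\: T|)%N.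
  by have := cardsUI T S; have := cardsID T S; rewrite setIC; lia.
have cardTS_le : (#|T :|: S| <= n)%N by rewrite -[n in (_ <= n)%N]card_ord max_card.
have jST : (0 < #|S :\: T|)%N by rewrite card_gt0; apply/set0Pn; exists j; rewrite inE jT.
have cardST_le : (#|S :\: T| <= #|S|)%N by rewrite subset_leq_card ?subsetDl.
set z' := \rank (shorten C (T :|: S)) in rank_le *.
have z'_gt0 : (0 < z')%N by lia.
have := IHm (T :|: S) ltac:(lia) z'_gt0; rewrite -/z'.
have : ((z - 1) %/ r <= (z' - 1) %/ r + 1)%N.
  by rewrite -(divnDMl 1 _ r_gt0) mul1n leq_div2r //; lia.
move/(leq_mul (leqnn (delta - 1))); rewrite mulnDr muln1.
lia.
Qed.

Lemma dual_supp_lower :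
  (r %| k)%N -> (0 < k)%N -> (d + k + (delta - 1) * (k %/ r - 1) = n + 1)%N ->
  forall (E : 'M[F]_n) i,
  (E <= dual C)%MS -> \rank E = i -> (0 < i)%N -> (r + i <= #|supp E|)%N.
Proof.
move=> r_dvd_k k_gt0 optimal E i sED rankE i_gt0.
set S := supp E.
have sE : (E <= proj_on S :&: dual C)%MS by rewrite sub_capmx submx_proj_supp.
have := mxrankS sE; rewrite rankE => i_le.
have dual_split := mxrank_dual_on C S.
have shorten_split : (\rank (C *m proj_on S) + \rank (shorten C S))%N = k.
  by rewrite -(proj1 C_sys); apply: mxrank_mul_ker.
have r_le_k : (r <= k)%N := dvdn_leq k_gt0 r_dvd_k.
rewrite leqNgt; apply/negP => small_S.
have z_gt0 : (0 < \rank (shorten C S))%N by lia.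
have := shorten_locality_bound z_gt0.
have : (k %/ r - 1 <= (\rank (shorten C S) - 1) %/ r)%N.
  by rewrite -(mulnK (k %/ r - 1) r_gt0) mulnBl mul1n divnK // leq_div2r //; lia.
move/(leq_mul (leqnn (delta - 1))).
lia.
Qed.

Lemma dual_supp_upper i : (0 < k)%N -> (i <= delta - 1)%N ->
  exists2 E : 'M[F]_n, (E <= dual C)%MS /\ \rank E = i & (#|supp E| <= r + i)%N.
Proof.
move=> k_gt0 i_le.
have [c cC c_neq0] : exists2 c : 'rV[F]_n, in_code C c & c != 0.
  by apply/rowV0Pn; rewrite -mxrank_eq0 (proj1 C_sys) -lt0n.
have [j jk cj] := systematic_info_support cC c_neq0.
have [S0 [jS0 cardS0 locS0]] := C_loc jk.
set rho := \rank (C *m proj_on S0).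
have rho_gt0 : (0 < rho)%N.
  rewrite lt0n mxrank_eq0; apply: contraNneq cj => CS0.
  have := submxMr (proj_on S0) cC; rewrite CS0 submx0 => /eqP/matrixP/(_ 0 j).
  by rewrite mul_proj_on jS0 mxE => ->.
have rho_le : (rho + delta <= #|S0| + 1)%N :=
  local_rank_bound locS0 (submx_refl C) (submxMl _ _) rho_gt0.
have [S sSS0 cardS] := @subset_of_card _ S0 (rho + i) ltac:(lia).
have rank_CS : (\rank (C *m proj_on S) <= rho)%N.
  by rewrite -(proj_on_subset sSS0) mulmxA mxrankM_maxl.
have dual_split := mxrank_dual_on C S.
have [E sE rankE] := @submx_of_rank _ _ _ (proj_on S :&: dual C)%MS i ltac:(lia).
exists E; first by split; rewrite // (submx_trans sE (capmxSr _ _)).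
have := subset_leq_card (supp_subset (submx_trans sE (capmxSl _ _))).
lia.
Qed.

End LocallyRepairableCode.

Lemma ceil_div_dvd a b : (b %| a)%N -> ceil_div a b = (a %/ b)%N.
Proof.
case: b => [|b] /dvdnP[q ->]; first by rewrite /ceil_div !divn0.
by rewrite /ceil_div /= mulnK // addnC divnDMl // divn_small.
Qed.

Theorem corollary2 (F : finFieldType) (n k d r delta : nat) (C : 'M[F]_n) :
  rdelta_i_code C k r delta ->
  min_dist C d ->
  (r %| k)%N ->
  (d < r + 2 * delta - 1)%N ->
  (d%:Z = n%:Z - k%:Z + 1 - ((ceil_div k r)%:Z - 1) * (delta%:Z - 1))%R ->
  forall i : nat, (1 <= i <= delta - 1)%N -> is_ghw (dual C) i (r + i).
Proof.
move=> [C_sys C_loc] [[c [cC c_neq0] _] C_wt] r_dvd_k _ optimal i /andP[i_gt0 i_le].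
have k_gt0 : (0 < k)%N.
  rewrite -(proj1 C_sys) lt0n mxrank_eq0; apply: contraNneq c_neq0 => C0.
  by move: cC; rewrite /in_code C0 submx0.
have r_gt0 : (0 < r)%N := dvdn_gt0 k_gt0 r_dvd_k.
have delta_gt0 : (0 < delta)%N by move: (leq_trans i_gt0 i_le); rewrite subn_gt0 => /ltnW.
have optimal_nat : (d + k + (delta - 1) * (k %/ r - 1) = n + 1)%N.
  have q_gt0 : (0 < k %/ r)%N by rewrite divn_gt0 // dvdn_leq.
  move: optimal; rewrite ceil_div_dvd // (subzn q_gt0) (subzn delta_gt0) -PoszM mulnC.
  by move: (_ * _)%N => p; lia.
have lower := dual_supp_lower C_sys C_loc C_wt r_gt0 delta_gt0 r_dvd_k k_gt0 optimal_nat.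
split=> [|E sED rankE]; last exact: lower.
have [E [sED rankE] suppE] := dual_supp_upper C_sys C_loc r_gt0 delta_gt0 k_gt0 i_le.
by exists E => //; apply/eqP; rewrite eqn_leq suppE lower.
Qed.
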